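(* Let $\lambda/\mu$ be a border strip with $n$ cells, let $Q_{\lambda/\mu}$ be its border strip poset, and let $\omega$ be a reversed Schur labeling. Then $$e_q^{\mathrm{inv}}(Q_{\lambda/\mu},\omega)=e_q^{\mathrm{maj}}(Q_{\lambda/\mu},\omega).$$
   Context: English notation: $[\lambda]=\{(i,j):1\le i\le\ell(\lambda),1\le j\le\lambda_i\}$, $[\lambda/\mu]=[\lambda]\setminus[\mu]$, content $c(i,j)=j-i$. A border strip is a skew shape whose diagram is edge-connected with no $2\times2$ square. Its poset $Q_{\lambda/\mu}$ on $[\lambda/\mu]$ has $(i,j)\le(i',j')$ iff $i\ge i'$ and $j\ge j'$. A reversed Schur labeling is a bijection $\omega:[\lambda/\mu]\to[n]$ whose values strictly decrease as the cells are listed in increasing order of content. Each linear extension (order-preserving bijection $g:Q_{\lambda/\mu}\to[n]$) gives the word $\sigma=\omega\circ g^{-1}=\sigma_1\cdots\sigma_n$; $\mathrm{maj}(\sigma)=\sum_{i:\sigma_i>\sigma_{i+1}}i$ and $\mathrm{inv}(\sigma)=\#\{(i,j):i<j,\ \sigma_i>\sigma_j\}$. $e_q^{\mathrm{stat}}(Q_{\lambda/\mu},\omega)=\sum_g q^{\mathrm{stat}(\omega\circ g^{-1})}$ for $\mathrm{stat}\in\{\mathrm{maj},\mathrm{inv}\}$. *)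

From mathcomp Require Import all_boot all_order all_algebra.
Set Implicit Arguments. Unset Strict Implicit. Unset Printing Implicit Defensive.
Import GRing.Theory.

(* A cell (i, j) : row i, column j, 1-indexed (English notation). *)
Definition cell := (nat * nat)%type.

Definition is_partition (la : seq nat) : bool :=
  sorted geq la && all (fun x => 0 < x) la.

Definition in_diagram (la : seq nat) (c : cell) : bool :=
  [&& 0 < c.1, c.1 <= size la, 0 < c.2 & c.2 <= nth 0 la c.1.-1].

Definition contained (mu la : seq nat) : Prop :=
  forall c : cell, in_diagram mu c -> in_diagram la c.

Definition diagram (la : seq nat) : seq cell :=
  [seq (i, j) | i <- iota 1 (size la), j <- iota 1 (nth 0 la i.-1)].

Definition skew_cells (la mu : seq nat) : seq cell :=
  [seq c <- diagram la | ~~ in_diagram mu c].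

Definition adj (c d : cell) : bool :=
  ((c.1 == d.1) && ((c.2 == d.2.+1) || (d.2 == c.2.+1))) ||
  ((c.2 == d.2) && ((c.1 == d.1.+1) || (d.1 == c.1.+1))).

Definition edge_connected (cs : seq cell) : Prop :=
  forall c d, c \in cs -> d \in cs ->
    exists p : seq cell, [/\ path adj c p, last c p = d & all (mem cs) p].

Definition no_2x2_square (cs : seq cell) : Prop :=
  ~ exists i j, [/\ (i, j) \in cs, (i.+1, j) \in cs, (i, j.+1) \in cs
                  & (i.+1, j.+1) \in cs].

Definition border_strip (la mu : seq nat) : Prop :=
  [/\ is_partition la, is_partition mu, contained mu la,
      edge_connected (skew_cells la mu) & no_2x2_square (skew_cells la mu)].

Definition content (c : cell) : int := (c.2%:Z - c.1%:Z)%R.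

Definition leQ (c d : cell) : bool := (d.1 <= c.1) && (d.2 <= c.2).

Definition reversed_schur_labeling (la mu : seq nat) (n : nat)
    (om : cell -> nat) : Prop :=
  perm_eq [seq om c | c <- skew_cells la mu] (iota 1 n) /\
  (forall c d, c \in skew_cells la mu -> d \in skew_cells la mu ->
     (content c < content d)%R -> om d < om c).

(* A linear extension g : Q -> [n] is encoded by the listing g^{-1}(1), ...,
   g^{-1}(n) of the cells, i.e. a permutation s of the cells with
   g(c) = index c s + 1; g is order preserving iff the condition below holds. *)
Definition is_linext (cs : seq cell) (s : seq cell) : bool :=
  perm_eq s cs &&
  all (fun c => all (fun d => leQ c d ==> (index c s <= index d s)) cs) cs.

Definition linexts (cs : seq cell) : seq (seq cell) :=
  [seq s <- permutations cs | is_linext cs s].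

(* Statistics on words (positions 1-indexed). *)
Definition maj_stat (w : seq nat) : nat :=
  \sum_(0 <= i < (size w).-1 | nth 0 w i.+1 < nth 0 w i) i.+1.

Definition inv_stat (w : seq nat) : nat :=
  \sum_(0 <= i < size w) \sum_(i.+1 <= j < size w) (nth 0 w j < nth 0 w i).

Definition e_q (stat : seq nat -> nat) (la mu : seq nat) (om : cell -> nat)
  : {poly int} :=
  \sum_(s <- linexts (skew_cells la mu)) 'X^(stat [seq om c | c <- s]).

From mathcomp Require Import all_boot all_order all_algebra zify.
Set Implicit Arguments. Unset Strict Implicit. Unset Printing Implicit Defensive.

(* Foata's second fundamental transformation [foata] is an injective map on
   words with inv (foata w) = maj w.  It only rotates blocks whose letters lie
   on the same side of the letter being appended, so it keeps a before b as
   soon as every letter whose value lies between theirs precedes b.  In a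
   border strip with a reversed Schur labeling, the cells whose labels lie
   strictly between those of two comparable cells c <= d sit between them on a
   common row or column, hence below d; so [foata] maps linear extensions to
   linear extensions, and being injective it permutes them. *)

Lemma index_filter (T : eqType) (q : pred T) (s : seq T) a b : q a -> q b ->
  (index a (filter q s) < index b (filter q s)) = (index a s < index b s).
Proof.
move=> qa qb; elim: s => [|y s IH] //=; rewrite /index /=.
case qy: (q y) => /=; first by case: (y == a); case: (y == b).
have [ya|ya] := eqVneq y a; first by rewrite ya qa in qy.
have [yb|yb] := eqVneq y b; first by rewrite yb qb in qy.
exact: IH.
Qed.

Section CycleBlocks.
Variables (T : eqType) (p : pred T).

(* Cut the word after each letter satisfying p and move that letter to the
   front of its block; buf holds the current unfinished block. *)
Fixpoint cycle_blocks_from (buf w : seq T) : seq T :=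
  match w with
  | [::] => buf
  | y :: w' => if p y then y :: buf ++ cycle_blocks_from [::] w'
               else cycle_blocks_from (rcons buf y) w'
  end.

Definition cycle_blocks (w : seq T) : seq T := cycle_blocks_from [::] w.

Definition ends_in (w : seq T) : bool :=
  if w is z :: w' then p (last z w') else true.

Lemma ends_in_rcons s y : ends_in (rcons s y) = p y.
Proof. by case: s => [|z s] //=; rewrite last_rcons. Qed.

Lemma perm_cycle_blocks_from buf w : perm_eq (cycle_blocks_from buf w) (buf ++ w).
Proof.
elim: w buf => [|y w IH] buf /=; first by rewrite cats0.
case: (p y); last by rewrite -cat_rcons.
by rewrite -cat1s perm_catCA perm_cat2l /= perm_cons IH.
Qed.

Lemma perm_cycle_blocks w : perm_eq (cycle_blocks w) w.
Proof. exact: perm_cycle_blocks_from. Qed.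

Lemma cycle_blocks_from_block buf N y r : all (predC p) N -> p y ->
  cycle_blocks_from buf (N ++ y :: r) = y :: buf ++ N ++ cycle_blocks r.
Proof.
elim: N buf => [|z N IH] buf /=; first by move=> _ ->.
by case/andP=> /negbTE pz pN py; rewrite pz IH // cat_rcons.
Qed.

Lemma cycle_blocks_block N y r : all (predC p) N -> p y ->
  cycle_blocks (N ++ y :: r) = y :: N ++ cycle_blocks r.
Proof. exact: cycle_blocks_from_block. Qed.

Lemma ends_in_decomp u : u != [::] -> ends_in u ->
  exists N y r, [/\ u = N ++ y :: r, all (predC p) N, p y & ends_in r].
Proof.
elim: u => [|z u IH] //= _ pu; case pz: (p z).
  by exists [::], z, u; split => //; case: u pu {IH}.
case: u IH pu => [|w u] IH /=; first by rewrite pz.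
move=> pu; have [N [y [r [-> pN py pr]]]] := IH isT pu.
by exists (z :: N), y, r; rewrite /= pz.
Qed.

Lemma ends_in_ind (P : seq T -> Prop) : P [::] ->
  (forall N y r, all (predC p) N -> p y -> ends_in r -> P r -> P (N ++ y :: r)) ->
  forall u, ends_in u -> P u.
Proof.
move=> P0 Pblock u; have [m] := ubnP (size u); elim: m u => // m IH u.
have [-> //|u0] := eqVneq u [::].
move=> size_u /(ends_in_decomp u0) [N [y [r [def_u pN py pr]]]].
rewrite def_u; apply: Pblock => //; apply: IH => //.
by move: size_u; rewrite def_u size_cat /=; lia.
Qed.

Lemma cycle_blocks_cat A B :
  ends_in A -> cycle_blocks (A ++ B) = cycle_blocks A ++ cycle_blocks B.
Proof.
move: A; apply: ends_in_ind => // N y r pN py _ IH.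
by rewrite -catA cat_cons !cycle_blocks_block // IH catA.
Qed.

Lemma ends_in_rev_cycle_blocks u : ends_in u -> ends_in (rev (cycle_blocks u)).
Proof.
move: u; apply: ends_in_ind => // N y r pN py _ _.
by rewrite cycle_blocks_block // rev_cons ends_in_rcons.
Qed.

(* Reversing turns each cycled block y :: N into rev N ++ [:: y], so a second
   cycling undoes the first. *)
Lemma cycle_blocks_rev u : ends_in u -> cycle_blocks (rev (cycle_blocks u)) = rev u.
Proof.
move: u; apply: ends_in_ind => // N y r pN py pr IH.
rewrite cycle_blocks_block // rev_cons rev_cat -cats1 -catA.
rewrite cycle_blocks_cat ?ends_in_rev_cycle_blocks // IH.
rewrite cycle_blocks_block ?all_rev //= cats0.
by rewrite rev_cat rev_cons cat_rcons.
Qed.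

Lemma cycle_blocks_inj u v : ends_in u -> ends_in v ->
  cycle_blocks u = cycle_blocks v -> u = v.
Proof.
move=> pu pv eq_uv; apply: (can_inj revK).
by rewrite -(cycle_blocks_rev pu) -(cycle_blocks_rev pv) eq_uv.
Qed.

Lemma cycle_blocks_head y0 u : u != [::] -> ends_in u -> p (head y0 (cycle_blocks u)).
Proof.
move=> u0 pu; have [N [y [r [-> pN py _]]]] := ends_in_decomp u0 pu.
by rewrite cycle_blocks_block.
Qed.

Lemma filter_cycle_blocks u : ends_in u -> filter p (cycle_blocks u) = filter p u.
Proof.
move: u; apply: ends_in_ind => // N y r pN py _ IH.
have filterN : filter p N = [::].
  by apply/eqP; rewrite -[_ == _]negbK -has_filter -all_predC.
by rewrite cycle_blocks_block //= !filter_cat /= py filterN IH.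
Qed.

Lemma filter_predC_cycle_blocks u :
  ends_in u -> filter (predC p) (cycle_blocks u) = filter (predC p) u.
Proof.
move: u; apply: ends_in_ind => // N y r pN py _ IH.
by rewrite cycle_blocks_block //= !filter_cat /= py IH.
Qed.

Lemma cycle_blocks_index u a b : ends_in u -> p a = p b ->
  (index a (cycle_blocks u) < index b (cycle_blocks u)) = (index a u < index b u).
Proof.
move=> pu pab; case pa: (p a).
  have pb : p b by rewrite -pab.
  by rewrite -(index_filter _ pa pb) filter_cycle_blocks // index_filter.
have pa' : predC p a by rewrite /= pa.
have pb' : predC p b by rewrite /= -pab pa.
by rewrite -(index_filter _ pa' pb') filter_predC_cycle_blocks // index_filter.
Qed.

End CycleBlocks.

Lemma map_cycle_blocks (T1 T2 : eqType) (f : T1 -> T2) (p1 : pred T1) (p2 : pred T2) w :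
  p1 =1 p2 \o f -> map f (cycle_blocks p1 w) = cycle_blocks p2 (map f w).
Proof.
move=> p12; suff gen buf :
    map f (cycle_blocks_from p1 buf w) = cycle_blocks_from p2 (map f buf) (map f w).
  exact: gen [::].
elim: w buf => [|y w IH] buf //=.
by rewrite p12 /=; case: (p2 (f y)); rewrite /= ?map_cat IH ?map_rcons.
Qed.

Section Foata.
Variables (T : eqType) (k : T -> nat).

Definition foata_side (x : T) (u : seq T) : pred T :=
  if k x < k (last x u) then fun y => k x < k y else fun y => k y <= k x.

Definition foata_step (u : seq T) (x : T) : seq T :=
  rcons (cycle_blocks (foata_side x u) u) x.

Definition foata (s : seq T) : seq T := foldl foata_step [::] s.

Lemma foata_rcons s x : foata (rcons s x) = foata_step (foata s) x.
Proof. by rewrite /foata foldl_rcons. Qed.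

Lemma ends_in_foata_side x u : ends_in (foata_side x u) u.
Proof.
case: u => [|z u] //=; rewrite /foata_side /=; case: ifP => //= /negbT.
by rewrite -leqNgt.
Qed.

Lemma perm_foata s : perm_eq (foata s) s.
Proof.
elim/last_ind: s => [|s x IH] //.
rewrite foata_rcons /foata_step -!cats1 perm_cat2r.
exact: perm_trans (perm_cycle_blocks _ _) IH.
Qed.

Lemma last_foata x s : last x (foata s) = last x s.
Proof. by elim/last_ind: s => [|s y _] //; rewrite foata_rcons /foata_step !last_rcons. Qed.

Lemma foata_step_inj x : injective (foata_step^~ x).
Proof.
move=> u v /= /rcons_inj [eq_uv].
have size_uv : size u = size v.
  rewrite -(perm_size (perm_cycle_blocks (foata_side x u) u)) eq_uv.
  exact: perm_size (perm_cycle_blocks _ _).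
have [u0|u0] := eqVneq u [::]; first by move: size_uv; rewrite u0 => /esym/size0nil ->.
have v0 : v != [::] by rewrite -size_eq0 -size_uv size_eq0.
have hu := cycle_blocks_head x u0 (ends_in_foata_side x u).
have hv := cycle_blocks_head x v0 (ends_in_foata_side x v).
rewrite -eq_uv in hv.
(* The first letter of the cycled word tells which side was used. *)
have side_uv : foata_side x u = foata_side x v.
  by move: hu hv; rewrite /foata_side; case: ifP; case: ifP => //= _ _; lia.
rewrite side_uv in eq_uv; apply: cycle_blocks_inj eq_uv; last exact: ends_in_foata_side.
by rewrite -side_uv ends_in_foata_side.
Qed.

Lemma foata_inj : injective foata.
Proof.
move=> s t; elim/last_ind: s t => [|s x IH] t.
  case/lastP: t => // t y.
  by rewrite foata_rcons /foata_step => /(congr1 size); rewrite size_rcons.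
case/lastP: t => [|t y].
  by rewrite foata_rcons /foata_step => /(congr1 size); rewrite size_rcons.
rewrite !foata_rcons => eq_st; case/rcons_inj: (eq_st) => _ eq_xy; subst y.
by rewrite (IH t (foata_step_inj eq_st)).
Qed.

Lemma foata_step_index u x a b : a \in u -> b \in u ->
  foata_side x u a = foata_side x u b ->
  (index a (foata_step u x) < index b (foata_step u x)) = (index a u < index b u).
Proof.
move=> au bu sab; have mem_cb := perm_mem (perm_cycle_blocks (foata_side x u) u).
rewrite /foata_step -!cats1 !index_cat !mem_cb au bu.
exact: cycle_blocks_index (ends_in_foata_side x u) sab.
Qed.

Lemma foata_step_index_last u x a : a \in u -> x \notin u ->
  index a (foata_step u x) < index x (foata_step u x).
Proof.
move=> au xu; have mem_cb := perm_mem (perm_cycle_blocks (foata_side x u) u).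
rewrite /foata_step -!cats1 !index_cat !mem_cb au (negbTE xu) /= eqxx addn0.
by rewrite index_mem mem_cb.
Qed.

Lemma foata_index_lt s a b : uniq s -> {in s &, injective k} ->
  a \in s -> b \in s -> index a s < index b s ->
  (forall e, e \in s -> (k a < k e < k b) || (k b < k e < k a) ->
     index e s < index b s) ->
  index a (foata s) < index b (foata s).
Proof.
elim/last_ind: s => [|s x IH] //; rewrite rcons_uniq => /andP [xs us] k_inj.
have mem_foata := perm_mem (perm_foata s).
have index_s c : c \in s -> index c (rcons s x) = index c s.
  by move=> cs; rewrite -cats1 index_cat cs.
have index_x : index x (rcons s x) = size s.
  by rewrite -cats1 index_cat (negbTE xs) /= eqxx addn0.
rewrite foata_rcons !mem_rcons !in_cons.
have [->|bx] := eqVneq b x.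
  move=> /predU1P [-> | a_s] _; first by rewrite ltnn.
  by move=> _ _; apply: foata_step_index_last; rewrite ?mem_foata.
move=> a_in /= bs ab between_before.
have ax : a != x.
  by apply: contraTneq ab => ->; rewrite index_x (index_s _ bs) -leqNgt ltnW ?index_mem.
rewrite (negbTE ax) /= in a_in; rewrite !index_s // in ab.
have in_rcons : {subset s <= rcons s x}.
  by move=> c cs; rewrite mem_rcons in_cons cs orbT.
have x_in : x \in rcons s x by rewrite mem_rcons mem_head.
have x_out : ~~ ((k a < k x < k b) || (k b < k x < k a)).
  apply/negP => /(between_before x x_in); rewrite index_x index_s //.
  by rewrite ltnNge ltnW // index_mem.
have kxa : k x != k a by apply: contraNneq ax => /k_inj -> //; apply: in_rcons.
have kxb : k x != k b by apply: contraNneq bx => /k_inj -> //; apply: in_rcons.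
rewrite foata_step_index ?mem_foata //; last first.
  by rewrite /foata_side; case: ifP => _ /=; lia.
apply: IH => // [c d /in_rcons cs /in_rcons ds|e es between]; first exact: k_inj.
by rewrite -(index_s e) // -(index_s b) //; apply: between_before => //; apply: in_rcons.
Qed.

End Foata.

Lemma map_foata (T : eqType) (k : T -> nat) s : map k (foata k s) = foata id (map k s).
Proof.
elim/last_ind: s => [|s x IH] //.
rewrite map_rcons !foata_rcons /foata_step map_rcons -IH; congr rcons.
apply: map_cycle_blocks => y /=.
by rewrite /foata_side (last_map k); case: ifP.
Qed.

Lemma inv_stat_nil : inv_stat [::] = 0.
Proof. by rewrite /inv_stat big_geq. Qed.

Lemma inv_stat_cons a w : inv_stat (a :: w) = count (fun z => z < a) w + inv_stat w.
Proof.
rewrite /inv_stat /= big_nat_recl // (big_add1 _ _ 0) /=; congr (_ + _).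
  rewrite -(big_nth 0 xpredT (fun z => (z < a : nat))).
  by elim: w => [|z w IH]; rewrite ?big_nil // big_cons IH.
by apply: eq_big_nat => i _; rewrite (big_add1 _ _ i.+1).
Qed.

Definition cross_inversions (A B : seq nat) : nat :=
  \sum_(a <- A) count (fun z => z < a) B.

Lemma inv_stat_cat A B :
  inv_stat (A ++ B) = inv_stat A + inv_stat B + cross_inversions A B.
Proof.
rewrite /cross_inversions; elim: A => [|a A IH].
  by rewrite inv_stat_nil big_nil addn0.
by rewrite cat_cons !inv_stat_cons big_cons count_cat IH; lia.
Qed.

Lemma cross_inversions_cons A y B :
  cross_inversions A (y :: B) = count (fun a => y < a) A + cross_inversions A B.
Proof.
rewrite /cross_inversions; elim: A => [|a A IH]; first by rewrite !big_nil.
by rewrite !big_cons /= IH; lia.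
Qed.

Lemma cross_inversions_perm A B B' :
  perm_eq B B' -> cross_inversions A B = cross_inversions A B'.
Proof. by move/permP=> eqB; apply: eq_bigr => a _; rewrite eqB. Qed.

Lemma inv_stat_rcons w x : inv_stat (rcons w x) = inv_stat w + count (fun a => x < a) w.
Proof.
rewrite -cats1 inv_stat_cat cross_inversions_cons inv_stat_cons inv_stat_nil /=.
by rewrite /cross_inversions big1 //; lia.
Qed.

(* Moving y from the end to the front of the block N ++ [:: y] creates the
   inversions of y with the smaller letters of N and destroys those with the
   larger ones. *)
Lemma inv_stat_rotate_block N y r r' : perm_eq r' r ->
  inv_stat (y :: N ++ r') + count (fun z => y < z) N + inv_stat r =
  inv_stat (N ++ y :: r) + count (fun z => z < y) N + inv_stat r'.
Proof.
move=> perm_r; have /permP eq_r := perm_r.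
rewrite inv_stat_cons !inv_stat_cat inv_stat_cons count_cat eq_r cross_inversions_cons.
rewrite (cross_inversions_perm N perm_r).
(* lia only sees through the counts once they are named. *)
set lt_N := count (fun z => z < y) N; set gt_N := count (fun z => y < z) N.
by set lt_r := count (fun z => z < y) r; lia.
Qed.

Lemma inv_stat_cycle_blocks_up (p : pred nat) u :
  (forall y z, p y -> ~~ p z -> z < y) -> ends_in p u ->
  inv_stat (cycle_blocks p u) = inv_stat u + count (predC p) u.
Proof.
move=> p_up; move: u; apply: ends_in_ind => [|N y r pN py _ IH].
  by rewrite addn0.
have lt_N : {in N, forall z, z < y} by move=> z /(allP pN); apply: p_up.
have := inv_stat_rotate_block N y (perm_cycle_blocks p r).
rewrite cycle_blocks_block // (eq_in_count (a1 := fun z => y < z) (a2 := pred0)).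
  rewrite (eq_in_count (a1 := fun z => z < y) (a2 := predT)); last by move=> z /lt_N.
  have cN : count (predC p) N = size N by apply/eqP; rewrite -all_count.
  by rewrite count_pred0 count_predT count_cat /= py cN IH /=; lia.
by move=> z /lt_N /ltnW; rewrite leqNgt => /negbTE.
Qed.

Lemma inv_stat_cycle_blocks_down (p : pred nat) u :
  (forall y z, p y -> ~~ p z -> y < z) -> ends_in p u ->
  inv_stat (cycle_blocks p u) + count (predC p) u = inv_stat u.
Proof.
move=> p_down; move: u; apply: ends_in_ind => [|N y r pN py _ IH].
  by rewrite addn0.
have gt_N : {in N, forall z, y < z} by move=> z /(allP pN); apply: p_down.
have := inv_stat_rotate_block N y (perm_cycle_blocks p r).
rewrite cycle_blocks_block // (eq_in_count (a1 := fun z => z < y) (a2 := pred0)).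
  rewrite (eq_in_count (a1 := fun z => y < z) (a2 := predT)); last by move=> z /gt_N.
  have cN : count (predC p) N = size N by apply/eqP; rewrite -all_count.
  by rewrite count_pred0 count_predT count_cat /= py cN -IH /=; lia.
by move=> z /gt_N /ltnW; rewrite leqNgt => /negbTE.
Qed.

Lemma maj_stat_rcons w x :
  maj_stat (rcons w x) = maj_stat w + (if x < last x w then size w else 0).
Proof.
case: w => [|y w]; first by rewrite /maj_stat /= !big_geq // ltnn.
rewrite /maj_stat size_rcons /= big_mkcond big_nat_recr //= [in RHS]big_mkcond.
congr (_ + _).
  apply: eq_big_nat => i /andP [_ lt_i].
  rewrite nth_rcons lt_i; case: i lt_i => [|i] lt_i //=.
  by rewrite nth_rcons; have -> : i < size w by lia.
rewrite nth_rcons ltnn eqxx.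
case: w => [|z w] //=.
by rewrite -rcons_cons nth_rcons /= ltnSn (nth_last 0 (z :: w)).
Qed.

Lemma inv_stat_foata w : inv_stat (foata id w) = maj_stat w.
Proof.
elim/last_ind: w => [|w x IH]; first by rewrite inv_stat_nil /maj_stat big_geq.
rewrite foata_rcons /foata_step maj_stat_rcons -IH inv_stat_rcons.
rewrite (permP (perm_cycle_blocks _ _)) -(perm_size (perm_foata id w)).
have := ends_in_foata_side id x (foata id w).
rewrite /foata_side last_foata /=; case: ifP => _ ends.
  rewrite (inv_stat_cycle_blocks_up _ ends) => [|y z /= lt_xy]; last by rewrite -leqNgt; lia.
  by rewrite -addnA (addnC (count (predC _) _)) count_predC.
rewrite -(inv_stat_cycle_blocks_down _ ends) => [|y z /= le_yx]; last by rewrite -ltnNge; lia.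
by rewrite addn0; congr (_ + _); apply: eq_count => y /=; rewrite ltnNge.
Qed.

Lemma mem_diagram la c : (c \in diagram la) = in_diagram la c.
Proof.
rewrite /diagram; apply/allpairsPdep/idP.
  move=> [i [j [i_in j_in ->]]]; move: i_in j_in; rewrite !mem_iota /in_diagram /=.
  by move=> *; apply/and4P; split; lia.
case: c => i j /and4P [/= *]; exists i, j; split => //; rewrite mem_iota; lia.
Qed.

Lemma mem_skew_cells la mu c :
  (c \in skew_cells la mu) = in_diagram la c && ~~ in_diagram mu c.
Proof. by rewrite mem_filter mem_diagram andbC. Qed.

Lemma partition_nth_leq la i j : is_partition la -> i <= j -> nth 0 la j <= nth 0 la i.
Proof.
case/andP=> sorted_la _ le_ij; have [lt_j | ge_j] := ltnP j (size la).
  apply: (sorted_leq_nth (fun _ _ _ h1 h2 => leq_trans h2 h1) leqnn 0 sorted_la) => //.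
  by rewrite inE; lia.
by rewrite nth_default.
Qed.

Lemma skew_cells_convex la mu u v r t : is_partition la -> is_partition mu ->
  u \in skew_cells la mu -> v \in skew_cells la mu ->
  u.1 <= r <= v.1 -> u.2 <= t <= v.2 -> (r, t) \in skew_cells la mu.
Proof.
move=> la_part mu_part; case: u => u1 u2; case: v => v1 v2.
rewrite !mem_skew_cells /in_diagram /=.
move=> /andP [/and4P [u1_gt0 _ u2_gt0 _] u_out] /andP [/and4P [_ v1_le _ v2_le] _].
move=> /andP [le_ur le_rv] /andP [le_ut le_tv].
have la_rv : nth 0 la v1.-1 <= nth 0 la r.-1 by apply: partition_nth_leq; lia.
have mu_ur : nth 0 mu r.-1 <= nth 0 mu u1.-1 by apply: partition_nth_leq; lia.
apply/andP; split; first by apply/and4P; split; lia.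
by apply: contra u_out => /and4P [_ r_le _ t_le]; apply/and4P; split; lia.
Qed.

Lemma is_linextP cs s :
  reflect (perm_eq s cs /\ {in cs &, forall c d, leQ c d -> index c s <= index d s})
          (is_linext cs s).
Proof.
apply: (iffP andP) => [[perm_s /allP ord_s] | [perm_s ord_s]]; split => //.
  by move=> c d cs_c cs_d; move: (ord_s c cs_c) => /allP /(_ d cs_d) /implyP.
by apply/allP => c cs_c; apply/allP => d cs_d; apply/implyP; apply: ord_s.
Qed.

Lemma mem_linexts cs s : (s \in linexts cs) = is_linext cs s.
Proof. by rewrite mem_filter mem_permutations andb_idr // => /andP []. Qed.

Section BorderStrip.
Variables la mu : seq nat.
Hypotheses (la_part : is_partition la) (mu_part : is_partition mu).
Hypothesis no_square : no_2x2_square (skew_cells la mu).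
Local Notation cs := (skew_cells la mu).

Lemma skew_cells_not_southeast u v : u \in cs -> v \in cs -> u.1 < v.1 -> u.2 < v.2 -> False.
Proof.
case: u v => [u1 u2] [v1 v2] cs_u cs_v /= lt1 lt2; apply: no_square; exists u1, u2.
by split; apply: (skew_cells_convex la_part mu_part cs_u cs_v) => /=; lia.
Qed.

Lemma content_inj_skew : {in cs &, injective content}.
Proof.
case=> [u1 u2] [v1 v2] cs_u cs_v; rewrite /content /= => eq_uv.
case: (ltngtP u1 v1) => [lt1|lt1|eq1].
- by case: (skew_cells_not_southeast cs_u cs_v) => /=; lia.
- by case: (skew_cells_not_southeast cs_v cs_u) => /=; lia.
- by congr pair; lia.
Qed.

(* Two comparable cells of a border strip share a row or a column, and the
   segment between them contains every cell of intermediate content. *)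
Lemma leQ_content_between c d e : c \in cs -> d \in cs -> e \in cs -> leQ c d ->
  (content d < content e < content c)%R || (content c < content e < content d)%R ->
  leQ e d.
Proof.
case: c d e => [c1 c2] [d1 d2] [e1 e2] cs_c cs_d cs_e /andP [/= le1 le2].
rewrite /content /= => between.
have same_line : (c1 == d1) || (c2 == d2).
  apply/negPn/negP; rewrite negb_or => /andP [ne1 ne2].
  by case: (skew_cells_not_southeast cs_d cs_c) => /=; lia.
rewrite /leQ /=; case/orP: same_line => /eqP eq_line.
  have cs_f : (d1, e2 + d1 - e1) \in cs.
    by apply: (skew_cells_convex la_part mu_part cs_d cs_c) => /=; lia.
  have : (d1, e2 + d1 - e1) = (e1, e2).
    by apply: content_inj_skew => //; rewrite /content /=; lia.
  by case=> eq1 _; lia.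
have cs_f : (e1 + d2 - e2, d2) \in cs.
  by apply: (skew_cells_convex la_part mu_part cs_d cs_c) => /=; lia.
have : (e1 + d2 - e2, d2) = (e1, e2).
  by apply: content_inj_skew => //; rewrite /content /=; lia.
by case=> _ eq2; lia.
Qed.

Section ReversedLabeling.
Variable om : cell -> nat.
Hypothesis om_reversing :
  forall c d, c \in cs -> d \in cs -> (content c < content d)%R -> om d < om c.

Lemma labeling_ltE c d : c \in cs -> d \in cs -> (om c < om d) = (content d < content c)%R.
Proof.
move=> cs_c cs_d; case: (Order.TotalTheory.ltgtP (content c) (content d)) => lt_cd.
- by apply/negbTE; rewrite -leqNgt ltnW // om_reversing.
- exact: om_reversing.
- by rewrite (content_inj_skew cs_c cs_d lt_cd) ltnn.
Qed.

Lemma labeling_inj : {in cs &, injective om}.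
Proof.
move=> c d cs_c cs_d eq_om; apply: content_inj_skew => //.
case: (Order.TotalTheory.ltgtP (content c) (content d)) => // lt_cd.
- by move: (om_reversing cs_c cs_d lt_cd); rewrite eq_om ltnn.
- by move: (om_reversing cs_d cs_c lt_cd); rewrite eq_om ltnn.
Qed.

Hypothesis cs_uniq : uniq cs.

Lemma foata_linext s : s \in linexts cs -> foata om s \in linexts cs.
Proof.
rewrite !mem_linexts => /is_linextP [perm_s ord_s].
have mem_s : s =i cs := perm_mem perm_s.
apply/is_linextP; split => [|c d cs_c cs_d le_cd].
  exact: perm_trans (perm_foata om s) perm_s.
have [-> //|ne_cd] := eqVneq c d.
have lt_index e : e \in cs -> e != d -> leQ e d -> index e s < index d s.
  move=> cs_e ne_ed le_ed; rewrite ltn_neqAle ord_s // andbT.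
  by apply: contra ne_ed => /eqP /index_inj -> //; rewrite mem_s.
apply/ltnW/foata_index_lt; rewrite ?mem_s ?(perm_uniq perm_s) ?lt_index //.
  by move=> x y; rewrite !mem_s; apply: labeling_inj.
move=> e; rewrite mem_s => cs_e between; apply: lt_index => //.
  by apply: contraTneq between => ->; rewrite ltnn andbF.
apply: (leQ_content_between cs_c cs_d cs_e le_cd).
by rewrite -!labeling_ltE //; case/orP: between => /andP [-> ->]; rewrite ?orbT.
Qed.

End ReversedLabeling.
End BorderStrip.

Lemma perm_map_closed (T : eqType) (f : T -> T) (s : seq T) :
  uniq s -> injective f -> {in s, forall x, f x \in s} -> perm_eq (map f s) s.
Proof.
move=> uniq_s f_inj f_s; have uniq_fs : uniq (map f s) by rewrite map_inj_uniq.
have sub_fs : {subset map f s <= s} by move=> _ /mapP [x xs ->]; apply: f_s.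
have [_ eq_fs] := uniq_min_size uniq_fs sub_fs (eq_leq (esym (size_map f s))).
exact: uniq_perm.
Qed.

Theorem corollary7p2 (la mu : seq nat) (n : nat) (om : cell -> nat) :
  border_strip la mu ->
  size (skew_cells la mu) = n ->
  reversed_schur_labeling la mu n om ->
  e_q inv_stat la mu om = e_q maj_stat la mu om.
Proof.
move=> [la_part mu_part _ _ no_square] _ [perm_om om_reversing].
have cs_uniq : uniq (skew_cells la mu).
  by apply: (@map_uniq _ _ om); rewrite (perm_uniq perm_om) iota_uniq.
have linexts_uniq : uniq (linexts (skew_cells la mu)).
  by rewrite filter_uniq ?permutations_uniq.
rewrite /e_q -(perm_big _ (perm_map_closed linexts_uniq (@foata_inj _ om) _)).
  by rewrite big_map; apply: eq_bigr => s _; rewrite map_foata inv_stat_foata.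
by move=> s; apply: foata_linext.
Qed.
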